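(* Let $L=(\ell_1,\dots,\ell_n)$, $K=(k_1,\dots,k_n)\in\mathbb{R}^n$ with $0<k_i<\ell_i$ for all $i$, and let $X=(x_1,\dots,x_n)\in\mathbb{R}^n$. Then $\mathcal{S}_{L,K}\cap(X+\mathcal{S}_{L,K})\neq\varnothing$ if and only if $|x_i|<\ell_i$ for all $1\le i\le n$ and there exist indices $j,r\in\{1,\dots,n\}$ such that $x_j<\ell_j-k_j$ and $-(\ell_r-k_r)<x_r$.
   Context: $\mathcal{S}_{L,K}=\{(y_1,\dots,y_n)\in\mathbb{R}^n: 0\le y_i<\ell_i \text{ for all } i, \text{ and there exists } j \text{ with } y_j<\ell_j-k_j\}$, and $X+\mathcal{S}_{L,K}=\{X+Y: Y\in\mathcal{S}_{L,K}\}$. *)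

(* concrete classical reals R. Vectors of R^n are represented
   as functions nat -> R, of which only the coordinates 0..n-1 matter
   (0-based indexing of the paper's indices 1..n). *)
From Stdlib Require Import Reals.
Open Scope R_scope.

Definition in_S (n : nat) (L K Y : nat -> R) : Prop :=
  (forall i, (i < n)%nat -> 0 <= Y i /\ Y i < L i) /\
  (exists j, (j < n)%nat /\ Y j < L j - K j).

Definition in_translate_S (n : nat) (L K X Z : nat -> R) : Prop :=
  exists Y, in_S n L K Y /\ forall i, (i < n)%nat -> Z i = X i + Y i.

(* If Z lies in both S and X + S, then each X i = Z i - (Z i - X i) is a
   difference of two points of [0, L i), and the two witnesses of the
   existential clauses give j and r.  Conversely, when |X i| < L i the point
   Z i = max(0, X i) works: Z i - X i = max(0, - X i), so both Z and Z - X
   stay in [0, L i), and Z j = max(0, X j) < L j - K j, while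
   Z r - X r = max(0, - X r) < L r - K r. *)
From Stdlib Require Import Reals Lra.
Open Scope R_scope.

Lemma in_translate_S_iff (n : nat) (L K X Z : nat -> R) :
  in_translate_S n L K X Z <-> in_S n L K (fun i => Z i - X i).
Proof.
  split.
  - intros [Y [[HY [j [Hj HYj]]] HZ]]; split.
    + intros i Hi; rewrite (HZ i Hi); replace (X i + Y i - X i) with (Y i) by ring.
      exact (HY i Hi).
    + exists j; split; [exact Hj|]; rewrite (HZ j Hj); lra.
  - intros HS; exists (fun i => Z i - X i); split; [exact HS|].
    intros i _; ring.
Qed.

Lemma Rabs_minus_lt (a b l : R) :
  0 <= a < l -> 0 <= b < l -> Rabs (a - b) < l.
Proof. intros Ha Hb; apply Rabs_def1; lra. Qed.

Lemma Rmax0_range (x l : R) : Rabs x < l -> 0 <= Rmax 0 x < l.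
Proof.
  intros Hx; pose proof (Rabs_pos x); pose proof (Rle_abs x).
  split; [apply Rmax_l | apply Rmax_lub_lt; lra].
Qed.

Lemma Rmax0_minus (x : R) : Rmax 0 x - x = Rmax 0 (- x).
Proof.
  unfold Rmax; destruct (Rle_dec 0 x), (Rle_dec 0 (- x)); lra.
Qed.

Section Intersection.

Variables (n : nat) (L K X : nat -> R).

Lemma S_meet_translate_bounds (Z : nat -> R) :
  in_S n L K Z -> in_translate_S n L K X Z ->
  (forall i, (i < n)%nat -> Rabs (X i) < L i) /\
  exists j r, (j < n)%nat /\ (r < n)%nat /\
    X j < L j - K j /\ - (L r - K r) < X r.
Proof.
  intros [HZ [j [Hj HZj]]] HT.
  apply in_translate_S_iff in HT; destruct HT as [HY [r [Hr HYr]]].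
  split.
  - intros i Hi; replace (X i) with (Z i - (Z i - X i)) by ring.
    exact (Rabs_minus_lt _ _ _ (HZ i Hi) (HY i Hi)).
  - exists j, r; repeat split; try assumption.
    + destruct (HY j Hj); lra.
    + destruct (HZ r Hr); lra.
Qed.

Lemma S_meet_translate_witness :
  (forall i, (i < n)%nat -> K i < L i) ->
  (forall i, (i < n)%nat -> Rabs (X i) < L i) ->
  forall j r, (j < n)%nat -> (r < n)%nat ->
  X j < L j - K j -> - (L r - K r) < X r ->
  in_S n L K (fun i => Rmax 0 (X i)) /\
  in_translate_S n L K X (fun i => Rmax 0 (X i)).
Proof.
  intros HK HX j r Hj Hr HXj HXr.
  split; [|apply in_translate_S_iff]; split.
  - intros i Hi; exact (Rmax0_range _ _ (HX i Hi)).
  - exists j; split; [exact Hj|].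
    specialize (HK j Hj); apply Rmax_lub_lt; lra.
  - intros i Hi; rewrite Rmax0_minus; apply Rmax0_range.
    rewrite Rabs_Ropp; exact (HX i Hi).
  - exists r; split; [exact Hr|]; rewrite Rmax0_minus.
    specialize (HK r Hr); apply Rmax_lub_lt; lra.
Qed.

End Intersection.

Theorem mainTheorem12 (n : nat) (L K X : nat -> R)
  (hK : forall i, (i < n)%nat -> 0 < K i /\ K i < L i) :
  (exists Z, in_S n L K Z /\ in_translate_S n L K X Z) <->
  ((forall i, (i < n)%nat -> Rabs (X i) < L i) /\
   exists j r, (j < n)%nat /\ (r < n)%nat /\
     X j < L j - K j /\ - (L r - K r) < X r).
Proof.
  split.
  - intros [Z [HZ HT]]; exact (S_meet_translate_bounds n L K X Z HZ HT).
  - intros [HX [j [r [Hj [Hr [HXj HXr]]]]]].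
    exists (fun i => Rmax 0 (X i)).
    apply (S_meet_translate_witness n L K X) with j r; try assumption.
    intros i Hi; exact (proj2 (hK i Hi)).
Qed.
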